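(* For each $n$, let $K=K(n)$ be a kernel, $k=k(n)\in\mathbb N$, and $C=C(K,k)$ a uniformly random core with kernel $K$ and $|V(K)|+k$ vertices. If $|E(K)|=o(k)$ and $|E(K)|=(3/2+o(1))|V(K)|$, then $C$ rooted at a uniformly random vertex of $V(C)$ converges in the local weak sense to $\mathcal P_2$, and $C$ rooted at a uniformly random vertex of $V(K)$ converges in the local weak sense to $\mathcal P_3$.
   Context: A kernel is a multigraph (loops and multiple edges allowed) of minimum degree at least three; a core has minimum degree at least two; a core has kernel $K$ if $K$ arises from it by replacing every maximal path with all internal vertices of degree two by an edge, equivalently the core is obtained from $K$ by subdividing edges. $C(K,k)$ is uniform among cores with kernel $K$ and $k$ additional vertices. $\mathcal P_k$ is the (deterministic) rooted tree in which the root has degree $k$ and all other vertices have degree two. Local weak convergence $G_n\to G_0$: for all finite rooted $(H,r_H)$ and $\ell\in\mathbb N$, $\Pr[B_\ell(G_n)\cong(H,r_H)]\to\Pr[B_\ell(G_0)\cong(H,r_H)]$. *)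

From HB Require Import structures.
From mathcomp Require Import all_boot all_order all_algebra.
From Stdlib Require Import ClassicalEpsilon.
Set Implicit Arguments. Unset Strict Implicit. Unset Printing Implicit Defensive.
Import Order.TTheory GRing.Theory Num.Theory.

(* A multigraph: a vertex type, an edge type, and for each edge its (unordered)
   pair of endpoints, recorded as an ordered pair; a loop has equal endpoints. *)
Record mgraph := MGraph { gV : Type; gE : Type; gends : gE -> gV * gV }.

Record fmgraph := FMGraph { fV : finType; fE : finType; fends : fE -> fV * fV }.

Definition mgraph_of_fmgraph (H : fmgraph) : mgraph := MGraph (@fends H).

Definition joins (G : mgraph) (e : gE G) (u v : gV G) : Prop :=
  gends e = (u, v) \/ gends e = (v, u).

Fixpoint within (G : mgraph) (r : gV G) (l : nat) (v : gV G) : Prop :=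
  match l with
  | 0 => v = r
  | l'.+1 => within r l' v \/ exists (u : gV G) (e : gE G), within r l' u /\ joins e u v
  end.

(* The ball B_l(G, r) is the subgraph induced by the vertices at distance <= l
   from r (all edges with both endpoints in the ball), rooted at r. *)
Definition ball_iso (G : mgraph) (r : gV G) (l : nat) (H : fmgraph) (rH : fV H) : Prop :=
  exists (f : fV H -> gV G) (g : fE H -> gE G),
    injective f /\
    (forall v : gV G, within r l v <-> exists x, f x = v) /\
    f rH = r /\
    injective g /\
    (forall e : gE G, (within r l (gends e).1 /\ within r l (gends e).2)
                      <-> exists y, g y = e) /\
    (forall y : fE H, joins (g y) (f (fends y).1) (f (fends y).2)).

(* Root = None; Some (i, j) is the vertex at distance j+1 on the i-th ray. *)
Definition P_ends (d : nat) (e : 'I_d * nat) : option ('I_d * nat) * option ('I_d * nat) :=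
  match e.2 with
  | 0 => (None, Some (e.1, 0))
  | j.+1 => (Some (e.1, j), Some (e.1, j.+1))
  end.

Definition P_graph (d : nat) : mgraph := MGraph (@P_ends d).
Definition P_root (d : nat) : gV (P_graph d) := None.

Record kgraph := KGraph { kv : nat; ke : nat; kends : 'I_ke -> 'I_kv * 'I_kv }.

(* degree; a loop contributes 2 *)
Definition kdeg (K : kgraph) (v : 'I_(kv K)) : nat :=
  #|[set e | (kends e).1 == v]| + #|[set e | (kends e).2 == v]|.

Definition is_kernel (K : kgraph) : Prop := forall v : 'I_(kv K), 3 <= kdeg v.

(* A core with kernel K and k additional vertices is obtained by subdividing
   each edge e of K by a e new vertices, with \sum_e a e = k. *)
Definition compositions (K : kgraph) (k : nat) : {set {ffun 'I_(ke K) -> 'I_k.+1}} :=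
  [set a : {ffun 'I_(ke K) -> 'I_k.+1} | \sum_(e < ke K) (a e : nat) == k].

Section Core.
Variables (K : kgraph) (k : nat) (a : {ffun 'I_(ke K) -> 'I_k.+1}).

(* the j-th new vertex on edge e exists iff j < a e *)
Definition core_new : finType := {p : 'I_(ke K) * 'I_k.+1 | (p.2 : nat) < a p.1}.
Definition core_V : finType := ('I_(kv K) + core_new)%type.
(* edge e of K becomes the path with a e + 1 edges, numbered 0..a e *)
Definition core_E : finType := {p : 'I_(ke K) * 'I_k.+2 | (p.2 : nat) <= a p.1}.

(* the j-th point (0 <= j <= a e + 1) along the path replacing e *)
Definition core_pt (e : 'I_(ke K)) (j : nat) : core_V :=
  if j == 0 then inl (kends e).1
  else match insub ((e, inord j.-1) : 'I_(ke K) * 'I_k.+1) with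
       | Some x => inr x
       | None => inl (kends e).2
       end.

Definition core_ends (x : core_E) : core_V * core_V :=
  (core_pt (sval x).1 (sval x).2, core_pt (sval x).1 (sval x).2.+1).

Definition core_graph : mgraph := MGraph core_ends.
End Core.

Local Open Scope ring_scope.

Definition pb (P : Prop) : bool := if excluded_middle_informative P then true else false.

(* Pr[ B_l(C, root) ~= (H, rH) ] where C = C(K,k) is uniform (uniform a) and the
   root is a uniformly random vertex of V(C). *)
Definition prob_ball_VC (K : kgraph) (k l : nat) (H : fmgraph) (rH : fV H) : rat :=
  (#|compositions K k|%:R)^-1 *
  \sum_(a in compositions K k)
     (#|[set v : core_V a | pb (@ball_iso (core_graph a) v l H rH)]|%:R
      / #|core_V a|%:R).

(* Same, with the root a uniformly random vertex of V(K) (a subset of V(C)). *)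
Definition prob_ball_VK (K : kgraph) (k l : nat) (H : fmgraph) (rH : fV H) : rat :=
  (#|compositions K k|%:R)^-1 *
  \sum_(a in compositions K k)
     (#|[set v : 'I_(kv K) | pb (@ball_iso (core_graph a) (inl v) l H rH)]|%:R
      / (kv K)%:R).

Definition cvg_rat (u : nat -> rat) (L : rat) : Prop :=
  forall eps : rat, 0 < eps -> exists N, forall n, (N <= n)%N -> `|u n - L| < eps.

(* Local weak convergence to the deterministic rooted graph (P_d, root):
   for every finite rooted (H, rH) and l, Pr[B_l(G_n) ~= (H,rH)] tends to
   Pr[B_l(P_d) ~= (H,rH)], which is 1 or 0. *)
Definition lwc_to_P (p : nat -> nat -> forall H : fmgraph, fV H -> rat) (d : nat) : Prop :=
  forall (H : fmgraph) (rH : fV H) (l : nat),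
    cvg_rat (fun n => p n l H rH)
            (if pb (@ball_iso (P_graph d) (P_root d) l H rH) then 1 else 0).

(* In a core, a vertex lying deep inside a subdivided edge (more than l
   steps away from both of its ends) sees, up to distance l, two disjoint paths,
   and a kernel vertex of degree 3 whose three incident edges are each
   subdivided more than 2l + 2 times sees three; so their l-balls are those of
   P_2 and P_3.  At most
   |V(K)| + (2l+3)|E(K)| of the |V(K)| + k core vertices are not deep, which is
   o(|V(K)| + k) because |V(K)| <= |E(K)| = o(k).  Among kernel vertices, by the
   handshake lemma at most 2|E(K)| - 3|V(K)| = o(|V(K)|) have degree other than
   3, and each short edge touches at most two vertices.  A switching argument,
   moving the vertices of another edge onto a fixed edge e, shows that e
   receives at most m vertices in a fraction at most (m+1)|E(K)|/(k-m) of the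
   compositions, so the expected number of short edges is
   O(|E(K)|^2/k) = o(|V(K)|). *)

From HB Require Import structures.
From mathcomp Require Import all_boot all_order all_algebra.
From Stdlib Require Import ClassicalEpsilon.
From mathcomp Require Import zify ring lra.
Import Order.TTheory GRing.Theory Num.Theory.
Set Implicit Arguments. Unset Strict Implicit. Unset Printing Implicit Defensive.

(** * Balls spanned by disjoint rays *)

Lemma joins_sym (G : mgraph) (e : gE G) u v : joins e u v -> joins e v u.
Proof. by case; [right | left]. Qed.

Lemma joins_unique (G : mgraph) (e : gE G) u v u' v' :
  joins e u v -> joins e u' v' -> (u' = u /\ v' = v) \/ (u' = v /\ v' = u).
Proof.
rewrite /joins; case: (gends e) => x y.
by case=> [[-> ->]|[-> ->]] [[-> ->]|[-> ->]]; auto.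
Qed.
Arguments joins_unique {G e u v u' v'}.

Definition ball_edge (G : mgraph) (r : gV G) (l : nat) (e : gE G) : Prop :=
  within r l (gends e).1 /\ within r l (gends e).2.

Section BallMorphism.
Variables (G1 G2 : mgraph) (r1 : gV G1) (r2 : gV G2) (l : nat).
Variables (phi : gV G1 -> gV G2) (psi : gE G1 -> gE G2).

Record ball_morphism : Prop := BallMorphism {
  ball_morph_inj : forall v w, within r1 l v -> within r1 l w -> phi v = phi w -> v = w;
  ball_morph_onto : forall w, within r2 l w <-> exists2 v, within r1 l v & phi v = w;
  ball_morph_root : phi r1 = r2;
  ball_morph_edge_inj : forall e e', ball_edge r1 l e -> ball_edge r1 l e' ->
    psi e = psi e' -> e = e';
  ball_morph_edge_onto : forall e, ball_edge r2 l e <-> exists2 e1, ball_edge r1 l e1 & psi e1 = e;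
  ball_morph_joins : forall e u v, ball_edge r1 l e -> joins e u v -> joins (psi e) (phi u) (phi v)
}.

Lemma ball_iso_morphism (H : fmgraph) (rH : fV H) :
  ball_morphism -> ball_iso r1 l rH -> ball_iso r2 l rH.
Proof.
case=> inj onto root einj eonto mjoins [f [g [finj [fon [fr [ginj [gon gj]]]]]]].
have fin x : within r1 l (f x) by apply/fon; exists x.
have gin y : ball_edge r1 l (g y) by apply/gon; exists y.
exists (phi \o f), (psi \o g); split; last split; last split; last split; last split.
- by move=> x y /inj => /(_ (fin x) (fin y)) /finj.
- move=> w; rewrite onto; split=> [[v /fon [x <-] <-]|[x <-]]; first by exists x.
  by exists (f x).
- by rewrite /= fr root.
- by move=> x y /einj => /(_ (gin x) (gin y)) /ginj.
- move=> e; split=> [/eonto [e1 /gon [y <-] <-]|[y <-]]; first by exists y.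
  by apply/eonto; exists (g y).
- by move=> y; apply: mjoins (gj y).
Qed.

End BallMorphism.

Section Rays.
Variables (G : mgraph) (r : gV G) (d l : nat).
Variables (rho : 'I_d -> nat -> gV G) (sig : 'I_d -> nat -> gE G).

(* [rho i j] and [sig i j] are the j-th vertex and the j-th edge of the i-th of
   d paths leaving r; they are disjoint up to depth l + 1 and exhaust the
   edges met up to depth l. *)
Record rays : Prop := Rays {
  rays_gt0 : (0 < d)%N;
  rays_root : forall i, rho i 0 = r;
  rays_joins : forall i j, (j <= l)%N -> joins (sig i j) (rho i j) (rho i j.+1);
  rays_inj : forall i j i' j', (j <= l.+1)%N -> (j' <= l.+1)%N -> rho i j = rho i' j' ->
    (j = 0 /\ j' = 0) \/ (i = i' /\ j = j');
  rays_edge_inj : forall i j i' j', (j < l)%N -> (j' < l)%N -> sig i j = sig i' j' ->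
    i = i' /\ j = j';
  rays_edges : forall i j e u, (j <= l)%N -> joins e (rho i j) u ->
    exists i' j', (j' <= j)%N /\ e = sig i' j'
}.

Hypothesis R : rays.

Lemma within_rays m : (m <= l)%N ->
  forall w, within r m w <-> exists i j, (j <= m)%N /\ w = rho i j.
Proof.
case: R => d_gt0 root rjoins rinj _ redges.
elim: m => [|m IH] lt_ml w /=.
  split=> [->|[i [[|j] [// _ ->]]]]; last exact: root.
  by exists (Ordinal d_gt0), 0; rewrite root.
have le_ml := ltnW lt_ml; split.
  case=> [/(IH le_ml) [i [j [le_jm ->]]]|[u [e [/(IH le_ml) [i [j [le_jm ->]]] ej]]]].
    by exists i, j; rewrite leqW.
  have le_jl := leq_trans le_jm le_ml.
  have [i' [j' [le_j'j e_sig]]] := redges _ _ _ _ le_jl ej; subst e.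
  have := joins_unique (rjoins i' j' (leq_trans le_j'j le_jl)) ej.
  case=> -[_ ->]; exists i'.
    by exists j'.+1; split=> //; lia.
  by exists j'; split=> //; lia.
case=> i [j [le_jm ->]].
case: (ltngtP j m.+1) => [lt_jm|lt_mj|->].
- by left; apply/(IH le_ml); exists i, j.
- by move: le_jm lt_mj; lia.
- right; exists (rho i m), (sig i m); split; last exact: rjoins.
  by apply/(IH le_ml); exists i, m.
Qed.

Lemma ball_edge_rays e : ball_edge r l e <-> exists i j, (j < l)%N /\ e = sig i j.
Proof.
have W := within_rays (leqnn l).
case: R => _ _ rjoins rinj _ redges; split.
  case=> /W [i [j [le_jl e1]]] /W [i' [j' [le_j'l e2]]].
  have ej : joins e (rho i j) (rho i' j') by left; rewrite -e1 -e2; case: (gends e).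
  have [i'' [j'' [le_j''j e_sig]]] := redges _ _ _ _ le_jl ej; subst e.
  case: (ltngtP j'' l) => [lt_j''l|lt_lj''|e_j''l]; first by exists i'', j''.
    by move: le_j''j le_jl lt_lj''; lia.
  move: ej; rewrite e_j''l => ej.
  case: (joins_unique ej (rjoins i'' l (leqnn l))) => -[_ e3]; [have := rinj _ _ _ _ (leqnn _) (leqW le_j'l) e3
                  | have := rinj _ _ _ _ (leqnn _) (leqW le_jl) e3]; case=> -[]; lia.
case=> i [j [lt_jl ->]].
have [e1|e1] := rjoins i j (ltnW lt_jl); rewrite /ball_edge e1 /=; split; apply/W.
all: by [exists i, j; split=> //; lia | exists i, j.+1].
Qed.

End Rays.

Section RaysTransport.
Variables (G1 G2 : mgraph) (r1 : gV G1) (r2 : gV G2) (d l : nat).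
Variables (rho1 : 'I_d -> nat -> gV G1) (sig1 : 'I_d -> nat -> gE G1).
Variables (rho2 : 'I_d -> nat -> gV G2) (sig2 : 'I_d -> nat -> gE G2).
Hypotheses (R1 : rays r1 l rho1 sig1) (R2 : rays r2 l rho2 sig2).

Lemma rays_ball_morphism : exists phi psi, ball_morphism r1 r2 l phi psi.
Proof.
pose i0 : 'I_d := Ordinal (rays_gt0 R1).
pose phi w := let p := epsilon (inhabits (i0, 0))
  (fun p : 'I_d * nat => (p.2 <= l)%N /\ rho1 p.1 p.2 = w) in rho2 p.1 p.2.
pose psi e := let p := epsilon (inhabits (i0, 0))
  (fun p : 'I_d * nat => (p.2 < l)%N /\ sig1 p.1 p.2 = e) in sig2 p.1 p.2.
have phi_rho i j : (j <= l)%N -> phi (rho1 i j) = rho2 i j.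
  move=> le_jl; rewrite /phi; set P := fun p : 'I_d * nat => _.
  have [le_pl e] := epsilon_spec (inhabits (i0, 0)) P (ex_intro P (i, j) (conj le_jl erefl)).
  have [[-> ->]|[-> ->]] := rays_inj R1 (leqW le_pl) (leqW le_jl) e => //.
  by rewrite !(rays_root R2).
have psi_sig i j : (j < l)%N -> psi (sig1 i j) = sig2 i j.
  move=> lt_jl; rewrite /psi; set P := fun p : 'I_d * nat => _.
  have [lt_pl e] := epsilon_spec (inhabits (i0, 0)) P (ex_intro P (i, j) (conj lt_jl erefl)).
  by have [-> ->] := rays_edge_inj R1 lt_pl lt_jl e.
have W1 := within_rays R1 (leqnn l); have W2 := within_rays R2 (leqnn l).
have E1 := ball_edge_rays R1; have E2 := ball_edge_rays R2.
exists phi, psi; split.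
- move=> v w /W1 [i [j [le_jl ->]]] /W1 [i' [j' [le_j'l ->]]].
  rewrite !phi_rho // => /(rays_inj R2 (leqW le_jl) (leqW le_j'l)) [[-> ->]|[-> ->]] //.
  by rewrite !(rays_root R1).
- move=> w; split=> [/W2 [i [j [le_jl ->]]]|[v /W1 [i [j [le_jl ->]]] <-]].
    by exists (rho1 i j); [apply/W1; exists i, j | rewrite phi_rho].
  by rewrite phi_rho //; apply/W2; exists i, j.
- by rewrite -(rays_root R1 i0) phi_rho // (rays_root R2).
- move=> e e' /E1 [i [j [lt_jl ->]]] /E1 [i' [j' [lt_j'l ->]]].
  by rewrite !psi_sig // => /(rays_edge_inj R2 lt_jl lt_j'l) [-> ->].
- move=> e; split=> [/E2 [i [j [lt_jl ->]]]|[e1 /E1 [i [j [lt_jl ->]]] <-]].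
    by exists (sig1 i j); [apply/E1; exists i, j | rewrite psi_sig].
  by rewrite psi_sig //; apply/E2; exists i, j.
- move=> e u v /E1 [i [j [lt_jl ->]]] /(joins_unique (rays_joins R1 i (ltnW lt_jl))).
  have le_jl := ltnW lt_jl; have J2 := rays_joins R2 i le_jl.
  by rewrite psi_sig //; case=> -[-> ->]; rewrite !phi_rho //; apply: joins_sym.
Qed.

Lemma rays_ball_iso (H : fmgraph) (rH : fV H) : ball_iso r1 l rH -> ball_iso r2 l rH.
Proof. by have [phi [psi M]] := rays_ball_morphism; apply: ball_iso_morphism M. Qed.

End RaysTransport.

Definition P_rho (d : nat) (i : 'I_d) (j : nat) : gV (P_graph d) :=
  if j is j'.+1 then Some (i, j') else None.
Definition P_sig (d : nat) (i : 'I_d) (j : nat) : gE (P_graph d) := (i, j).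

Lemma P_rays (d l : nat) : (0 < d)%N -> rays (P_root d) l (@P_rho d) (@P_sig d).
Proof.
move=> d_gt0; split=> //.
- by move=> i j _; left; case: j.
- by move=> i [|j] i' [|j'] _ _ //=; [left | case=> -> ->; right].
- by move=> i j i' j' _ _ [-> ->].
- move=> i j [i' j'] u _; rewrite /joins /= /P_ends /= => ej; exists i', j'; split=> //.
  by move: ej; case: j' => [|j'] /=; case: j => [|j] //=; case=> -[] //; lia.
Qed.

Lemma pb_ball_iso_rays (G : mgraph) (r : gV G) (d l : nat)
    (rho : 'I_d -> nat -> gV G) (sig : 'I_d -> nat -> gE G) (H : fmgraph) (rH : fV H) :
  rays r l rho sig -> pb (ball_iso r l rH) = pb (ball_iso (P_root d) l rH).
Proof.
move=> R; have RP := P_rays l (rays_gt0 R).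
rewrite /pb; case: excluded_middle_informative => iso1; case: excluded_middle_informative => iso2 //.
  by case: iso2; apply: (rays_ball_iso R RP).
by case: iso1; apply: (rays_ball_iso RP R).
Qed.

(** * Rays in a core *)

Section CoreGeometry.
Variables (K : kgraph) (k : nat) (a : {ffun 'I_(ke K) -> 'I_k.+1}).
Local Notation pt := (@core_pt K k a).

Lemma subdiv_le e : (a e <= k)%N.
Proof. by rewrite -ltnS. Qed.

Lemma core_pt0 e : pt e 0 = inl (kends e).1.
Proof. by []. Qed.

Lemma core_pt_end e : pt e (a e).+1 = inl (kends e).2.
Proof. by rewrite /core_pt /= insubF //= inordK ?ltnS ?subdiv_le ?ltnn. Qed.

Lemma core_pt_inner e m : (0 < m)%N -> (m <= a e)%N ->
  exists q : core_new a, pt e m = inr q /\ sval q = (e, inord m.-1).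
Proof.
case: m => [|m] // _ le_ma; rewrite /core_pt /=.
have lt_ma : (inord m : 'I_k.+1) < a e.
  by rewrite /= inordK // ltnS; apply: leq_trans (ltnW le_ma) (subdiv_le e).
by case: insubP => [q _ q_val|]; [exists q | rewrite /= lt_ma].
Qed.

Lemma core_pt_inr e m x : (0 < m)%N -> (m <= a e)%N -> pt e m <> inl x.
Proof. by move=> m_gt0 le_ma; have [q [-> _]] := core_pt_inner m_gt0 le_ma. Qed.

Lemma core_pt_inl e m v : (m <= (a e).+1)%N -> pt e m = inl v ->
  (m = 0 /\ (kends e).1 = v) \/ (m = (a e).+1 /\ (kends e).2 = v).
Proof.
case: m => [|m] le_ma; first by case; left.
case: (ltngtP m (a e)) => [lt_ma|lt_am|->]; last by rewrite core_pt_end; case; right.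
- by move/core_pt_inr; case.
- by move: le_ma lt_am; lia.
Qed.

Lemma core_pt_inj e m e' m' : pt e' m' = pt e m ->
  (0 < m)%N -> (m <= a e)%N -> (m' <= (a e').+1)%N -> e' = e /\ m' = m.
Proof.
move=> E m_gt0 le_ma le_m'a; have [q [q_pt q_val]] := core_pt_inner m_gt0 le_ma.
move: E; rewrite q_pt; case: (posnP m') => [->|m'_gt0]; first by rewrite core_pt0.
case: (ltngtP m' (a e').+1) => [lt_m'a|lt_am'|->]; last by rewrite core_pt_end.
- have [q' [-> q'_val]] := core_pt_inner m'_gt0 lt_m'a.
  case=> e_q; move: q'_val; rewrite e_q q_val => -[<- /(congr1 val)].
  have ha := subdiv_le e; have ha' := subdiv_le e'.
  by move=> /= E; split=> //; move: E; rewrite !inordK; lia.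
- by move: le_m'a lt_am'; lia.
Qed.

Lemma core_pt_new (q : core_new a) : pt (sval q).1 (sval q).2.+1 = inr q.
Proof.
have [q' [-> q'_val]] := core_pt_inner (ltn0Sn _) (valP q).
congr inr; apply: val_inj; rewrite /= q'_val.
by rewrite /= inord_val; case: (sval q).
Qed.

Fact core_edge_subproof e j : ((inord (minn j (a e)) : 'I_k.+2) <= a e)%N.
Proof. by rewrite inordK; have := subdiv_le e; lia. Qed.

Definition core_edge e j : core_E a := exist _ (e, inord (minn j (a e))) (core_edge_subproof e j).

Lemma core_edge_ends e j : (j <= a e)%N ->
  gends (core_edge e j : gE (core_graph a)) = (pt e j, pt e j.+1).
Proof.
by move=> le_ja; rewrite /= /core_ends /= inordK ?(minn_idPl le_ja) //; have := subdiv_le e; lia.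
Qed.

Lemma core_edge_inj e j e' j' : core_edge e j = core_edge e' j' ->
  (j <= a e)%N -> (j' <= a e')%N -> e = e' /\ j = j'.
Proof.
move=> E le_ja le_j'a; have := congr1 (fun x : core_E a => nat_of_ord (sval x).2) E.
have [/= e_e'] := congr1 (fun x : core_E a => (sval x).1) E; subst e'.
by have ha := subdiv_le e; rewrite /= !inordK; [split=> //; lia | lia | lia].
Qed.

Lemma core_edgeP (x : core_E a) : exists e j, (j <= a e)%N /\ x = core_edge e j.
Proof.
case: x => [[e j] le_ja]; exists e, j; split=> //.
apply: val_inj => /=; congr (_, _); apply: val_inj => /=.
by rewrite (minn_idPl le_ja) inordK //; have := subdiv_le e; lia.
Qed.

Lemma joins_core_edge (x : gE (core_graph a)) w u : joins x w u ->
  exists e j, [/\ (j <= a e)%N, x = core_edge e j & w = pt e j \/ w = pt e j.+1].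
Proof.
have [e [j [le_ja ->]]] := core_edgeP x.
by rewrite /joins core_edge_ends // => -[[<- _]|[_ <-]]; exists e, j; split; auto.
Qed.

End CoreGeometry.

Section InnerVertexRays.
Variables (K : kgraph) (k : nat) (a : {ffun 'I_(ke K) -> 'I_k.+1}) (l : nat) (q : core_new a).
Local Notation pt := (@core_pt K k a).
Let e := (sval q).1.
Let t : nat := (sval q).2.
Hypotheses (lt_lt : (l < t)%N) (far_from_end : (t + l + 2 <= a e)%N).

Definition inner_rho (i : 'I_2) (j : nat) : core_V a :=
  if val i == 0 then pt e (t.+1 + j) else pt e (t.+1 - j).
Definition inner_sig (i : 'I_2) (j : nat) : core_E a :=
  if val i == 0 then core_edge a e (t.+1 + j) else core_edge a e (t.+1 - j.+1).

Lemma inner_rays : rays (inr q : gV (core_graph a)) l inner_rho inner_sig.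
Proof.
split=> //.
- by move=> i; rewrite /inner_rho addn0 subn0; case: ifP => _; exact: core_pt_new.
- move=> [[|[|i]] ?] j le_jl //=; rewrite /inner_rho /inner_sig /joins core_edge_ends /=;
    try lia.
    by left; rewrite addnS.
  by right; congr (_, _); congr (pt _ _); lia.
- move=> [[|[|i]] ?] j [[|[|i']] ?] j' le_jl le_j'l //=; rewrite /inner_rho /= => E;
    have [_ ?] := core_pt_inj E ltac:(lia) ltac:(lia) ltac:(lia);
    by [left; lia | right; split; [exact: val_inj | lia]].
- move=> [[|[|i]] ?] j [[|[|i']] ?] j' lt_jl lt_j'l //=; rewrite /inner_sig /= => E;
    have [_ ?] := core_edge_inj E ltac:(lia) ltac:(lia);
    by [lia | split; [exact: val_inj | lia]].
- move=> i j x u le_jl /joins_core_edge [e' [c [le_ca -> ej]]].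
  have near m : (0 < m)%N -> (m <= a e)%N -> pt e' c = pt e m \/ pt e' c.+1 = pt e m ->
      e' = e /\ (c = m \/ c.+1 = m).
    by move=> m_gt0 le_ma [/core_pt_inj|/core_pt_inj] => /(_ m_gt0 le_ma) [|->->]; auto; lia.
  pose i0 : 'I_2 := ord0; pose i1 : 'I_2 := Ordinal (isT : (1 < 2)%N).
  move: ej; case: i => [[|[|i]] ?] //=; rewrite /inner_rho /= => ej.
  + have [-> [c_e|c_e]] := near (t.+1 + j) (ltn0Sn _) ltac:(lia) ltac:(case: ej; auto).
      by exists i0, j; rewrite /inner_sig /= c_e.
    case: j le_jl c_e {ej} => [|j] le_jl c_e.
      by exists i1, 0; split=> //; rewrite /inner_sig /=; congr (core_edge a _ _); lia.
    by exists i0, j; split=> //; rewrite /inner_sig /=; congr (core_edge a _ _); lia.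
  + have [-> [c_e|c_e]] := near (t.+1 - j) ltac:(lia) ltac:(lia) ltac:(case: ej; auto).
      case: j le_jl c_e {ej} => [|j] le_jl c_e.
        by exists i0, 0; split=> //; rewrite /inner_sig /=; congr (core_edge a _ _); lia.
      by exists i1, j; split=> //; rewrite /inner_sig /=; congr (core_edge a _ _); lia.
    by exists i1, j; split=> //; rewrite /inner_sig /=; congr (core_edge a _ _); lia.
Qed.

End InnerVertexRays.

Section KernelVertexRays.
Variables (K : kgraph) (k : nat) (a : {ffun 'I_(ke K) -> 'I_k.+1}) (l : nat) (v : 'I_(kv K)).
Local Notation pt := (@core_pt K k a).
Hypothesis deg3 : kdeg v = 3.
Hypothesis long_edges : forall e, (kends e).1 = v \/ (kends e).2 = v -> (l.*2 + 3 <= a e)%N.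

(* [(e, true)] (resp. [(e, false)]) is the end of [e] at its first (resp. second)
   endpoint, when that endpoint is [v]; a loop at [v] contributes both ends. *)
Definition half_edges : seq ('I_(ke K) * bool) :=
  [seq (e, true) | e in [set e | (kends e).1 == v]] ++
  [seq (e, false) | e in [set e | (kends e).2 == v]].

Lemma size_half_edges : size half_edges == 3.
Proof. by rewrite size_cat !size_map -!cardE -deg3. Qed.

Lemma mem_half_edges e b :
  ((e, b) \in half_edges) = (if b then (kends e).1 == v else (kends e).2 == v).
Proof.
have pair_inj (c : bool) : injective (fun e : 'I_(ke K) => (e, c)) by move=> x y [].
have other c s : ((e, c) \in [seq (x, ~~ c) | x <- s]) = false.
  by apply/negbTE/mapP => -[x _ []]; case: c.
by rewrite mem_cat; case: b; rewrite (other true, other false) ?orbF (mem_map (pair_inj _)) mem_enum inE.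
Qed.

Definition half_edge (i : 'I_3) : 'I_(ke K) * bool := tnth (Tuple size_half_edges) i.

Lemma half_edge_inj : injective half_edge.
Proof.
apply/tuple_uniqP; rewrite /= cat_uniq !map_inj_uniq ?enum_uniq //; try by move=> x y [].
by rewrite andbT; apply/hasPn => -[e b] /mapP [e' _ [_ ->]]; apply/negP => /mapP [? _ []].
Qed.

Lemma half_edgeP x : x \in half_edges -> exists i, half_edge i = x.
Proof. by case/(tnthP (Tuple size_half_edges)) => i ->; exists i. Qed.

Lemma half_edge_end i :
  (if (half_edge i).2 then (kends (half_edge i).1).1 else (kends (half_edge i).1).2) = v.
Proof.
have : half_edge i \in half_edges := mem_tnth i (Tuple size_half_edges).
by case: (half_edge i) => e []; rewrite mem_half_edges => /eqP.
Qed.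

Lemma long_half_edge i : (l.*2 + 3 <= a (half_edge i).1)%N.
Proof. by apply: long_edges; have := half_edge_end i; case: (half_edge i).2; auto. Qed.

Definition half_pos (i : 'I_3) (j : nat) : nat :=
  if (half_edge i).2 then j else (a (half_edge i).1).+1 - j.

Definition kernel_rho (i : 'I_3) (j : nat) : core_V a := pt (half_edge i).1 (half_pos i j).
Definition kernel_sig (i : 'I_3) (j : nat) : core_E a :=
  core_edge a (half_edge i).1 (if (half_edge i).2 then j else a (half_edge i).1 - j).

Lemma kernel_rho0 i : kernel_rho i 0 = inl v.
Proof.
rewrite /kernel_rho /half_pos subn0 -(half_edge_end i).
by case: (half_edge i).2; rewrite ?core_pt_end.
Qed.

Lemma half_pos_inner i j : (0 < j)%N -> (j <= l.+1)%N ->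
  (0 < half_pos i j)%N /\ (half_pos i j <= a (half_edge i).1)%N.
Proof. by have := long_half_edge i; rewrite /half_pos; case: (half_edge i).2; lia. Qed.

Lemma kernel_joins i j : (j <= l)%N ->
  joins (kernel_sig i j : gE (core_graph a)) (kernel_rho i j) (kernel_rho i j.+1).
Proof.
move=> le_jl; have := long_half_edge i; rewrite /kernel_rho /kernel_sig /half_pos.
case: (half_edge i) => e [] /= long_e; rewrite /joins core_edge_ends; try lia; first by left.
by right; congr (_, _); congr (pt _ _); lia.
Qed.

Lemma kernel_rho_inj i j i' j' : (j <= l.+1)%N -> (j' <= l.+1)%N ->
  kernel_rho i j = kernel_rho i' j' -> (j = 0 /\ j' = 0) \/ (i = i' /\ j = j').
Proof.
move=> le_jl le_j'l E.
case: (posnP j) => [j0|j_gt0]; case: (posnP j') => [j'0|j'_gt0]; first by left.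
- have [p_gt0 le_pa] := half_pos_inner i' j'_gt0 le_j'l.
  by move: E; rewrite j0 kernel_rho0 => /esym/(core_pt_inr p_gt0 le_pa).
- have [p_gt0 le_pa] := half_pos_inner i j_gt0 le_jl.
  by move: E; rewrite j'0 kernel_rho0 => /(core_pt_inr p_gt0 le_pa).
have [p_gt0 le_pa] := half_pos_inner i j_gt0 le_jl.
have [p'_gt0 le_p'a] := half_pos_inner i' j'_gt0 le_j'l.
have [e_e' p_p'] := core_pt_inj E p'_gt0 le_p'a (leqW le_pa).
right; move: e_e' p_p' (@half_edge_inj i i') (long_half_edge i); rewrite /half_pos.
case: (half_edge i) => e b; case: (half_edge i') => e' b' /= <-.
case: b; case: b' => p_p' inj_i ? //; try lia.
  by split; [exact: inj_i | ].
by split; [exact: inj_i | lia].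
Qed.

Lemma kernel_sig_inj i j i' j' : (j < l)%N -> (j' < l)%N ->
  kernel_sig i j = kernel_sig i' j' -> i = i' /\ j = j'.
Proof.
move=> lt_jl lt_j'l; move: (@half_edge_inj i i') (long_half_edge i) (long_half_edge i').
rewrite /kernel_sig; case: (half_edge i) => e b; case: (half_edge i') => e' b' /=.
case: b; case: b' => inj_i long_e long_e' /core_edge_inj [] //; try lia; move=> e_e' ?; subst e';
  by [lia | split; [exact: inj_i | lia]].
Qed.

Lemma kernel_rays_edges i j (x : gE (core_graph a)) u : (j <= l)%N -> joins x (kernel_rho i j) u ->
  exists i' j', (j' <= j)%N /\ x = kernel_sig i' j'.
Proof.
move=> le_jl /joins_core_edge [e [c [le_ca -> ej]]].
case: (posnP j) => [j0|j_gt0].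
  move: ej; rewrite j0 kernel_rho0 => -[] /esym/core_pt_inl.
    case=> [||[? _]]; [exact: leqW | move=> [-> e_v] | lia].
    have [i' e_i'] := @half_edgeP (e, true) ltac:(by rewrite mem_half_edges e_v).
    by exists i', 0; rewrite /kernel_sig e_i'.
  case=> [|[//]|[c_a e_v]]; first lia.
  have [i' e_i'] := @half_edgeP (e, false) ltac:(by rewrite mem_half_edges e_v).
  by exists i', 0; split=> //; rewrite /kernel_sig e_i' /=; congr (core_edge a _ _); lia.
have [p_gt0 le_pa] := half_pos_inner i j_gt0 (leqW le_jl).
have [e_e' c_p] : e = (half_edge i).1 /\ (c = half_pos i j \/ c.+1 = half_pos i j).
  case: ej => /esym/core_pt_inj => /(_ p_gt0 le_pa) [|->->]; auto; lia.
move: c_p le_pa; rewrite e_e' /kernel_sig /half_pos.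
have := long_half_edge i; case h_i: (half_edge i) => [e' []] /= long_e [c_p|c_p] le_pa.
- by exists i, j; rewrite h_i c_p.
- by exists i, j.-1; rewrite h_i /=; split; [lia | congr (core_edge a _ _); lia].
- by exists i, j.-1; rewrite h_i /=; split; [lia | congr (core_edge a _ _); lia].
- by exists i, j; rewrite h_i /=; split; [lia | congr (core_edge a _ _); lia].
Qed.

Lemma kernel_rays : rays (inl v : gV (core_graph a)) l kernel_rho kernel_sig.
Proof.
split=> //; [exact: kernel_rho0 | exact: kernel_joins | exact: kernel_rho_inj
  | exact: kernel_sig_inj | exact: kernel_rays_edges].
Qed.

End KernelVertexRays.

(** * Counting the other roots *)

Section Averages.
Local Open Scope ring_scope.

Lemma card_ratio_approx (T : finType) (N : nat) (P good : pred T) (b : bool) :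
  #|T| = N -> (0 < N)%N -> (forall v, good v -> P v = b) ->
  `|#|P|%:R / N%:R - (if b then 1 else 0)| <= #|[predC good]|%:R / N%:R :> rat.
Proof.
move=> <- T_gt0 goodP; have T_pos : (0 : rat) < #|T|%:R by rewrite ltr0n.
case: b goodP => goodP.
  have le_PT : (#|P| <= #|T|)%N by apply: max_card.
  have le_CP : (#|T| - #|P| <= #|[predC good]|)%N.
    rewrite -(cardC good) leq_subLR leq_add2r; apply: subset_leq_card.
    by apply/subsetP => x /goodP; rewrite !unfold_in.
  have -> : #|P|%:R / #|T|%:R - 1 = - ((#|T| - #|P|)%N%:R / #|T|%:R) :> rat.
    by rewrite natrB // mulrBl divff ?lt0r_neq0 //; ring.
  by rewrite normrN ger0_norm ?divr_ge0 ?ler0n // ler_pM2r ?invr_gt0 // ler_nat.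
rewrite subr0 ger0_norm ?divr_ge0 ?ler0n // ler_pM2r ?invr_gt0 // ler_nat.
apply: subset_leq_card; apply/subsetP => x; rewrite !unfold_in /=.
by apply: contraTN => /goodP ->.
Qed.

Lemma mean_dist_le (T : finType) (A : {set T}) (x bd : T -> rat) (c : rat) :
  (0 < #|A|)%N -> (forall a, a \in A -> `|x a - c| <= bd a) ->
  `|(#|A|%:R)^-1 * \sum_(a in A) x a - c| <= (#|A|%:R)^-1 * \sum_(a in A) bd a.
Proof.
move=> A_gt0 xbd; have A_pos : (0 : rat) < #|A|%:R by rewrite ltr0n.
have -> : (#|A|%:R)^-1 * \sum_(a in A) x a - c = (#|A|%:R)^-1 * \sum_(a in A) (x a - c).
  by rewrite big_split /= sumrN sumr_const -mulr_natl; field; rewrite lt0r_neq0.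
rewrite normrM ger0_norm ?invr_ge0 ?ler0n // ler_pM2l ?invr_gt0 //.
by apply: le_trans (ler_norm_sum _ _ _) _; apply: ler_sum.
Qed.

End Averages.

Section CoreVertices.
Variables (K : kgraph) (k : nat) (a : {ffun 'I_(ke K) -> 'I_k.+1}).

Lemma card_core_new : #|core_new a| = (\sum_(e < ke K) a e)%N.
Proof.
rewrite card_sig -sum1_card (partition_big (fun p => p.1) xpredT) //=.
apply: eq_bigr => e _; rewrite (reindex (pair e)) /=; last first.
  by exists snd => [t _ //|[e' t] /andP[_ /eqP <-]].
rewrite (eq_bigl (fun t : 'I_k.+1 => (t < a e)%N)) => [|t]; last by rewrite eqxx andbT.
by rewrite -(big_ord_widen _ (fun _ => 1%N) (ltnW (ltn_ord (a e)))) sum1_card card_ord.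
Qed.

Lemma card_core_V : a \in compositions K k -> #|core_V a| = (kv K + k)%N.
Proof. by rewrite inE => /eqP sum_a; rewrite card_sum card_ord card_core_new sum_a. Qed.

Variable l : nat.

Definition deep_inner (v : core_V a) : bool :=
  if v is inr q then (l < (sval q).2)%N && ((sval q).2 + l + 2 <= a (sval q).1)%N else false.

Lemma card_not_deep_inner : (#|[predC deep_inner]| <= kv K + ke K * l.*2.+3)%N.
Proof.
(* a shallow subdivision vertex is determined by its edge and by its position
   among the first l + 1 or the last l + 2 vertices of that edge *)
pose code (q : core_new a) : 'I_(l.*2.+3) :=
  inord (if ((sval q).2 <= l)%N then (sval q).2 : nat else (l.+1 + (a (sval q).1 - 1 - (sval q).2))%N).
pose f (v : core_V a) : 'I_(kv K) + 'I_(ke K) * 'I_(l.*2.+3) :=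
  match v with inl x => inl x | inr q => inr ((sval q).1, code q) end.
rewrite -[in X in (_ <= X + _)%N](card_ord (kv K)) -[X in (_ <= _ + X * _)%N](card_ord (ke K)).
rewrite -[X in (_ <= _ + _ * X)%N](card_ord (l.*2.+3)) -card_prod -card_sum.
apply: (leq_card_in f) => [[x|q] [y|q']] //=; first by move=> _ _ [->].
rewrite !unfold_in /= /code; case: q q' => [[e t] lt_ta] [[e' t'] lt_t'a] /= shallow shallow'.
case=> e_e' /(congr1 val); subst e'; rewrite /= !inordK; try by rewrite -mul2n; case: ifP; lia.
move=> code_eq; have t_t' : t = t'.
  by apply: val_inj; move: code_eq shallow shallow' lt_ta lt_t'a; case: ifP; case: ifP => /=; lia.
by subst t'; congr inr; apply: val_inj.
Qed.

End CoreVertices.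
Arguments deep_inner {K k} a l v.

Lemma sum_card_preimage (T U : finType) (f : T -> U) :
  (\sum_(u : U) #|[set x | f x == u]|)%N = #|T|.
Proof.
rewrite -sum1_card (partition_big f xpredT) //=.
by apply: eq_bigr => u _; rewrite -sum1_card; apply: eq_bigl => x; rewrite inE.
Qed.

Lemma sum_kdeg (K : kgraph) : (\sum_(v < kv K) kdeg v)%N = (2 * ke K)%N.
Proof.
rewrite big_split /= (sum_card_preimage (fun e => (kends e).1)).
by rewrite (sum_card_preimage (fun e => (kends e).2)) card_ord addnn mul2n.
Qed.

Lemma card_kdeg_neq3 (K : kgraph) : is_kernel K ->
  (#|[set v : 'I_(kv K) | kdeg v != 3]| + 3 * kv K <= 2 * ke K)%N.
Proof.
move=> kerK; rewrite -sum_kdeg -[in X in (_ + X)%N](card_ord (kv K)) mulnC -sum_nat_const.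
rewrite -sum1_card big_mkcond -big_split /=; apply: leq_sum => v _; rewrite inE.
by have := kerK v; case: (kdeg v) => [|[|[|[|n]]]].
Qed.

Lemma kernel_ke_gt0 (K : kgraph) : is_kernel K -> (0 < kv K)%N -> (0 < ke K)%N.
Proof.
move=> kerK kv_gt0; have deg := kerK (Ordinal kv_gt0).
have le_ke (A : {set 'I_(ke K)}) : (#|A| <= ke K)%N by rewrite (leq_trans (max_card _)) ?card_ord.
by have := leq_trans deg (leq_add (le_ke _) (le_ke _)); lia.
Qed.

Lemma card_bigcup_le (I T : finType) (P : pred I) (A : I -> {set T}) :
  (#|\bigcup_(i | P i) A i| <= \sum_(i | P i) #|A i|)%N.
Proof.
elim/big_rec2: _ => [|i B n _ le_Bn]; first by rewrite cards0.
by rewrite (leq_trans (leq_card_setU _ _)) // leq_add2l.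
Qed.

Definition incident (K : kgraph) (e : 'I_(ke K)) (v : 'I_(kv K)) : bool :=
  ((kends e).1 == v) || ((kends e).2 == v).

Lemma card_touched_le (K : kgraph) (F : {set 'I_(ke K)}) :
  (#|[set v | [exists e in F, incident e v]]| <= 2 * #|F|)%N.
Proof.
have -> : [set v | [exists e in F, incident e v]] = \bigcup_(e in F) [set (kends e).1; (kends e).2].
  apply/setP => v; rewrite inE; apply/existsP/bigcupP => -[e].
    by case/andP=> eF inc; exists e; rewrite // !inE eq_sym orbC eq_sym orbC.
  by move=> eF; rewrite !inE => inc; exists e; rewrite eF /incident eq_sym orbC eq_sym orbC.
apply: leq_trans (card_bigcup_le _ _) _; rewrite mulnC -sum_nat_const.
by apply: leq_sum => e _; rewrite cards2; case: (_ != _).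
Qed.

Section KernelVertices.
Variables (K : kgraph) (k : nat) (a : {ffun 'I_(ke K) -> 'I_k.+1}) (l : nat).

Definition well_subdivided (v : 'I_(kv K)) : bool :=
  (kdeg v == 3) && [forall e, incident e v ==> (l.*2.+2 < a e)%N].

Lemma card_not_well_subdivided : (#|[predC well_subdivided]| <=
  #|[set v : 'I_(kv K) | kdeg v != 3]| + 2 * #|[set e | (a e <= l.*2.+2)%N]|)%N.
Proof.
set F := [set e | (a e <= l.*2.+2)%N].
apply: (@leq_trans #|[set v | kdeg v != 3] :|: [set v | [exists e in F, incident e v]]|).
  apply: subset_leq_card; apply/subsetP => v; rewrite !inE /well_subdivided negb_and.
  case/orP=> [->//|/forallPn [e]]; rewrite negb_imply -leqNgt => /andP [inc short].
  by apply/orP; right; apply/existsP; exists e; rewrite inE short.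
by apply: leq_trans (leq_card_setU _ _) _; rewrite leq_add2l card_touched_le.
Qed.

End KernelVertices.

Lemma bigD2 n (f : 'I_n -> nat) e e' : e != e' ->
  (\sum_z f z = f e + f e' + \sum_(z | (z != e) && (z != e')) f z)%N.
Proof. by move=> ne; rewrite (bigD1 e) //= (bigD1 e') 1?eq_sym //= addnA. Qed.

Lemma sum_composition (K : kgraph) (k : nat) (a : {ffun 'I_(ke K) -> 'I_k.+1}) :
  a \in compositions K k -> (\sum_e (a e : nat))%N = k.
Proof. by rewrite inE => /eqP. Qed.

Lemma compositions_gt0 (K : kgraph) (k : nat) : (0 < ke K)%N -> (0 < #|compositions K k|)%N.
Proof.
move=> ke_gt0; pose e0 : 'I_(ke K) := Ordinal ke_gt0.
apply/card_gt0P; exists [ffun e => if e == e0 then ord_max else ord0].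
rewrite inE (bigD1 e0) //= ffunE eqxx big1 ?addn0 // => e /negbTE ne.
by rewrite ffunE ne.
Qed.

(** * Switching: few compositions make a given edge short *)

Section ShortEdge.
Variables (K : kgraph) (k : nat) (e : 'I_(ke K)) (m : nat).
Local Notation C := (compositions K k).
Local Notation FF := {ffun 'I_(ke K) -> 'I_k.+1}.

Definition short_at : {set FF} := [set a in C | (a e <= m)%N].

(* A triple (a, e', u) with u < a e' is sent to the composition keeping u
   vertices on e' and moving the other a e' - u onto e, paired with e' and the
   old value a e, from which a can be read off again. *)
Definition switch_dom : {set FF * 'I_(ke K) * 'I_k.+1} :=
  [set x : FF * 'I_(ke K) * 'I_k.+1 | [&& x.1.1 \in short_at, x.1.2 != e & (x.2 < x.1.1 x.1.2)%N]].

Definition switch (x : FF * 'I_(ke K) * 'I_k.+1) : FF * 'I_(ke K) * 'I_m.+1 :=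
  let: (a, e', u) := x in
  ([ffun z => if z == e then inord (a e + a e' - u) else if z == e' then u else a z], e',
   inord (a e)).

Lemma card_switch_dom : #|switch_dom| = (\sum_(a in short_at) \sum_(e' | e' != e) a e')%N.
Proof.
rewrite -sum1_card (eq_bigl (fun x : FF * 'I_(ke K) * 'I_k.+1 =>
  ((x.1.1 \in short_at) && (x.1.2 != e)) && (x.2 < x.1.1 x.1.2)%N)); last first.
  by move=> x; rewrite !inE andbA.
rewrite -(pair_big_dep (fun p : FF * 'I_(ke K) => (p.1 \in short_at) && (p.2 != e))
  (fun p (u : 'I_k.+1) => (u < p.1 p.2)%N) (fun _ _ => 1%N)) /=.
rewrite (eq_bigr (fun p : FF * 'I_(ke K) => (p.1 p.2 : nat))) => [|[a e'] _].
  by rewrite -(pair_big_dep (fun a => a \in short_at) (fun _ e' => e' != e) (fun a e' => a e' : nat)).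
rewrite (eq_bigl (fun t : 'I_k.+1 => (t < a e')%N)) //.
by rewrite -(big_ord_widen _ (fun _ => 1%N) (ltnW (ltn_ord (a e')))) sum1_card card_ord.
Qed.

Lemma card_switch_dom_ge : ((k - m) * #|short_at| <= #|switch_dom|)%N.
Proof.
rewrite card_switch_dom mulnC -sum1_card big_distrl /=.
apply: leq_sum => a; rewrite inE mul1n => /andP [aC le_am].
have := sum_composition aC; rewrite (bigD1 e) //= => sum_a.
by apply: leq_trans (leq_sub2l _ le_am) _; rewrite leq_subLR sum_a.
Qed.

Lemma switch_domP a e' u : (a, e', u) \in switch_dom ->
  [/\ a \in C, (a e <= m)%N, e' != e, (u < a e')%N & (a e + a e' <= k)%N].
Proof.
rewrite inE /= => /and3P [+ ne lt_ua]; rewrite inE => /andP [aC le_am]; split=> //.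
by have := sum_composition aC; rewrite (bigD2 _ ne); lia.
Qed.

Lemma switch_in x : x \in switch_dom -> switch x \in setX (setX C [set: 'I_(ke K)]) [set: 'I_m.+1].
Proof.
case: x => [[a e'] u] /switch_domP [aC le_am ne lt_ua le_k].
rewrite !inE /= !andbT; apply/eqP/(etrans _ (sum_composition aC)); rewrite !(bigD2 _ ne).
rewrite !ffunE eqxx (negbTE ne) eqxx inordK; last by rewrite ltnS (leq_trans (leq_subr _ _) le_k).
congr (_ + _)%N.
  by rewrite addnC subnK; [exact: addnC | exact: leq_trans (ltnW lt_ua) (leq_addl _ _)].
by apply: eq_bigr => z /andP [ne' ne'']; rewrite ffunE (negbTE ne') (negbTE ne'').
Qed.

Lemma switch_inj : {in switch_dom &, injective switch}.
Proof.
move=> [[a e1] u] [[b e2] w] /switch_domP [_ le_am ne lt_ua le_k] /switch_domP [_ le_bm _ lt_wb le_k'].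
case=> sw e12 ae_be; subst e2.
have {}ae_be : a e = b e :> nat by move: (congr1 val ae_be); rewrite /= !inordK //; lia.
have u_w : u = w.
  by move: (congr1 (fun f : FF => f e1) sw); rewrite !ffunE (negbTE ne) eqxx.
subst w; have ae1_be1 : a e1 = b e1 :> nat.
  move: (congr1 (fun f : FF => nat_of_ord (f e)) sw) => /=; rewrite !ffunE eqxx.
  rewrite !inordK ?ltnS ?(leq_trans (leq_subr _ _) le_k) ?(leq_trans (leq_subr _ _) le_k') //.
  move: le_k le_k' lt_ua lt_wb ae_be.
  set a1 := (a e : nat); set a2 := (a e1 : nat); set b1 := (b e : nat); set b2 := (b e1 : nat).
  lia.
congr (_, _, _); apply/ffunP => z; apply: val_inj.
case: (eqVneq z e) => [->|nze] //; case: (eqVneq z e1) => [->|nz1] //.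
by move: (congr1 (fun f : FF => nat_of_ord (f z)) sw); rewrite /= !ffunE (negbTE nze) (negbTE nz1).
Qed.

Lemma card_switch_dom_le : (#|switch_dom| <= #|C| * ke K * m.+1)%N.
Proof.
rewrite -(card_in_imset switch_inj).
apply: leq_trans (subset_leq_card (_ : _ \subset setX (setX C setT) setT)) _.
  by apply/subsetP => _ /imsetP [x x_dom ->]; exact: switch_in.
by rewrite !cardsX !cardsT !card_ord.
Qed.

Lemma card_short_at_le : ((k - m) * #|short_at| <= #|C| * ke K * m.+1)%N.
Proof. exact: leq_trans card_switch_dom_ge card_switch_dom_le. Qed.

End ShortEdge.

(** * Error bounds and asymptotics *)

Local Open Scope ring_scope.

Definition P_ball_prob (d l : nat) (H : fmgraph) (rH : fV H) : rat :=
  if pb (ball_iso (P_root d) l rH) then 1 else 0.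

Lemma prob_ball_VC_approx (K : kgraph) (k l : nat) (H : fmgraph) (rH : fV H) :
  (0 < #|compositions K k|)%N -> (0 < kv K + k)%N ->
  `|prob_ball_VC K k l rH - P_ball_prob 2 l rH| <=
    (kv K + ke K * l.*2.+3)%N%:R / (kv K + k)%N%:R.
Proof.
move=> C_gt0 n_gt0; rewrite /prob_ball_VC.
apply: le_trans (mean_dist_le (bd := fun=> (kv K + ke K * l.*2.+3)%N%:R / (kv K + k)%N%:R) C_gt0 _) _.
  move=> a aC; rewrite cardsE.
  apply: le_trans (card_ratio_approx (good := deep_inner a l) erefl _ _) _.
  - by rewrite card_core_V.
  - by move=> [//|q] /andP [lt_lt far]; apply: pb_ball_iso_rays (inner_rays lt_lt far).
  by rewrite card_core_V // ler_pM2r ?invr_gt0 ?ltr0n // ler_nat card_not_deep_inner.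
by rewrite sumr_const -[X in _ * X]mulr_natl mulKf // pnatr_eq0 -lt0n.
Qed.

Lemma sum_card_short_edges (K : kgraph) (k m : nat) :
  (\sum_(a in compositions K k) #|[set e | (a e <= m)%N]| = \sum_(e < ke K) #|short_at k e m|)%N.
Proof.
rewrite (eq_bigr (fun a : {ffun 'I_(ke K) -> 'I_k.+1} => \sum_(e | (a e <= m)%N) 1)%N);
  last by move=> a _; rewrite sum1dep_card.
by rewrite (exchange_big_dep xpredT) //=; apply: eq_bigr => e _; rewrite sum1dep_card.
Qed.

Lemma mean_card_short_edges_le (K : kgraph) (k m : nat) :
  (0 < #|compositions K k|)%N -> (m < k)%N ->
  (#|compositions K k|%:R)^-1 * (\sum_(a in compositions K k) #|[set e | (a e <= m)%N]|)%N%:R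
    <= (ke K * ke K * m.+1)%N%:R / (k - m)%N%:R :> rat.
Proof.
move=> C_gt0 lt_mk; set c := #|compositions K k|.
have c_pos : (0 : rat) < c%:R by rewrite ltr0n.
have km_pos : (0 : rat) < (k - m)%N%:R by rewrite ltr0n subn_gt0.
have : ((k - m) * \sum_(a in compositions K k) #|[set e | (a e <= m)%N]| <= c * (ke K * ke K * m.+1))%N.
  rewrite sum_card_short_edges big_distrr /=.
  apply: (@leq_trans (\sum_(e < ke K) c * ke K * m.+1)%N).
    by apply: leq_sum => e _; exact: card_short_at_le.
  by rewrite sum_nat_const card_ord !mulnA [(ke K * c)%N]mulnC.
rewrite -(ler_nat rat) !natrM => le_sum.
rewrite ler_pdivlMr // -(ler_pM2l c_pos) !mulrA mulfV ?lt0r_neq0 // mul1r mulrC.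
by rewrite -!mulrA in le_sum *.
Qed.

Lemma prob_ball_VK_approx (K : kgraph) (k l : nat) (H : fmgraph) (rH : fV H) :
  (0 < kv K)%N -> (0 < #|compositions K k|)%N -> (l.*2.+2 < k)%N ->
  `|prob_ball_VK K k l rH - P_ball_prob 3 l rH| <=
    (#|[set v : 'I_(kv K) | kdeg v != 3]|%:R +
      2 * ((ke K * ke K * l.*2.+3)%N%:R / (k - l.*2.+2)%N%:R)) / (kv K)%:R.
Proof.
move=> kv_gt0 C_gt0 lt_mk; rewrite /prob_ball_VK.
apply: le_trans (mean_dist_le (bd := fun a => #|[predC well_subdivided a l]|%:R / (kv K)%:R) C_gt0 _) _.
  move=> a aC; rewrite cardsE; apply: card_ratio_approx (card_ord _) kv_gt0 _.
  move=> v /andP [/eqP deg3 /forallP long]; apply: pb_ball_iso_rays (kernel_rays deg3 _).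
  by move=> e inc; rewrite addn3; apply: (implyP (long e)); case: inc => <-; rewrite /incident eqxx ?orbT.
rewrite -mulr_suml -natr_sum [_^-1 * _]mulrA ler_pM2r ?invr_gt0 ?ltr0n //.
have le_bad : (\sum_(a in compositions K k) #|[predC well_subdivided a l]| <=
    #|compositions K k| * #|[set v : 'I_(kv K) | kdeg v != 3]| +
    2 * \sum_(a in compositions K k) #|[set e | (a e <= l.*2.+2)%N]|)%N.
  rewrite big_distrr /= -sum_nat_const -big_split /=.
  by apply: leq_sum => a _; exact: card_not_well_subdivided.
rewrite -(ler_nat rat) in le_bad.
apply: le_trans (ler_wpM2l _ le_bad) _; first by rewrite invr_ge0 ler0n.
rewrite natrD 2!natrM mulrDr mulKf ?pnatr_eq0 -?lt0n // mulrCA lerD2l ler_pM2l ?ltr0n //.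
exact: mean_card_short_edges_le.
Qed.

Definition eventually (P : nat -> Prop) : Prop := exists N, forall n, (N <= n)%N -> P n.

Lemma eventually_and (P Q : nat -> Prop) :
  eventually P -> eventually Q -> eventually (fun n => P n /\ Q n).
Proof.
move=> [N1 P1] [N2 Q2]; exists (maxn N1 N2) => n; rewrite geq_max => /andP [n1 n2].
by split; [exact: P1 | exact: Q2].
Qed.

Lemma eventually_mono (P Q : nat -> Prop) :
  (forall n, P n -> Q n) -> eventually P -> eventually Q.
Proof. by move=> PQ [N P1]; exists N => n /P1 /PQ. Qed.

Lemma cvg_rat_dist_le (u b : nat -> rat) (L : rat) :
  eventually (fun n => `|u n - L| <= b n) ->
  (forall eps, 0 < eps -> eventually (fun n => b n <= eps)) -> cvg_rat u L.
Proof.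
move=> ub b0 eps eps_gt0; have [N le_eps] := eventually_and ub (b0 (eps / 2) ltac:(lra)).
by exists N => n /le_eps [le_b le_b']; lra.
Qed.

Lemma VC_bound_arith (x y z L eps : rat) : 0 <= x -> 0 < x + z -> 0 <= L -> 0 <= eps ->
  x <= y -> y * (L + 1) <= eps * z -> (x + y * L) / (x + z) <= eps.
Proof. by move=> x_ge0 xz_gt0 L_ge0 eps_ge0 le_xy le_yz; rewrite ler_pdivrMr //; nra. Qed.

Lemma VK_bound_arith (x y D k m M eps : rat) : 0 < x -> 0 < eps -> 0 <= m -> m < M ->
  D <= eps / 4 * x -> 0 <= y -> y <= 2 * x -> 32 * M * y <= eps * k -> 2 * M <= k ->
  (D + 2 * (y * y * M / (k - m))) / x <= eps.
Proof.
move=> x_gt0 eps_gt0 m_ge0 lt_mM le_D y_ge0 le_y le_yk le_Mk.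
have km_gt0 : 0 < k - m by lra.
have yM_ge0 : 0 <= y * M by apply: mulr_ge0; lra.
have le_yM : y * M <= eps * k / 32 by lra.
have le_yyM : y * y * M <= eps / 8 * x * (k - m).
  have le1 : y * (y * M) <= 2 * x * (y * M) by apply: ler_wpM2r.
  have le2 : 2 * x * (y * M) <= 2 * x * (eps * k / 32) by apply: ler_wpM2l; lra.
  have epsx_ge0 : 0 <= eps * x by apply: mulr_ge0; lra.
  nra.
have le_q : y * y * M / (k - m) <= eps / 8 * x by rewrite ler_pdivrMr.
have epsx_ge0 : 0 <= eps * x by apply: mulr_ge0; lra.
by rewrite ler_pdivrMr //; nra.
Qed.

Section Asymptotics.
Variables (K : nat -> kgraph) (k : nat -> nat).
Hypothesis kernelK : forall n, is_kernel (K n).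
Hypothesis kv_gt0 : forall n, (0 < kv (K n))%N.
Hypothesis ke_o_k : forall eps : rat, 0 < eps ->
  eventually (fun n => (ke (K n))%:R <= eps * (k n)%:R).
Hypothesis ke_kv : forall eps : rat, 0 < eps ->
  eventually (fun n => `|(ke (K n))%:R - 3 / 2 * (kv (K n))%:R| <= eps * (kv (K n))%:R).

Let C_gt0 n : (0 < #|compositions (K n) (k n)|)%N.
Proof. exact/compositions_gt0/kernel_ke_gt0. Qed.

Lemma kv_le_ke_le_2kv : eventually (fun n =>
  (kv (K n))%:R <= (ke (K n))%:R :> rat /\ (ke (K n))%:R <= 2 * (kv (K n))%:R :> rat).
Proof.
have half_gt0 : 0 < 1 / 2 :> rat by rewrite divr_gt0 ?ltr01 ?ltr0n.
by apply: eventually_mono (ke_kv half_gt0) => n; rewrite ler_norml => /andP []; lra.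
Qed.

Lemma lwc_uniform_core_vertex : lwc_to_P (fun n => prob_ball_VC (K n) (k n)) 2.
Proof.
move=> H rH l; pose L : rat := (l.*2.+3)%:R.
apply: (@cvg_rat_dist_le _ (fun n => (kv (K n) + ke (K n) * l.*2.+3)%N%:R / (kv (K n) + k n)%N%:R)).
  by exists 0 => n _; apply: prob_ball_VC_approx; rewrite ?ltn_addr.
move=> eps eps_gt0; have L_ge0 : 0 <= L by rewrite ler0n.
have small := @ke_o_k (eps / (L + 1)) ltac:(by rewrite divr_gt0 //; lra).
apply: eventually_mono (eventually_and kv_le_ke_le_2kv small) => n [[le_kv _] le_k].
rewrite !natrD natrM; apply: VC_bound_arith; rewrite ?ler0n //.
- by rewrite -natrD ltr0n ltn_addr.
- exact: ltW.
- by rewrite natr1 -ler_pdivlMr ?ltr0n // mulrAC; rewrite /L natr1 in le_k.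
Qed.

Lemma k_unbounded (c : rat) : 0 < c -> eventually (fun n => c <= (k n)%:R).
Proof.
move=> c_gt0; apply: eventually_mono (@ke_o_k c^-1 _) => [n le_k|]; last by rewrite invr_gt0.
have ke_ge1 : 1 <= (ke (K n))%:R :> rat by rewrite ler1n kernel_ke_gt0.
by move: (le_trans ke_ge1 le_k); rewrite ler_pdivlMl // mulr1.
Qed.

Lemma few_irregular_vertices (eps : rat) : 0 < eps ->
  eventually (fun n => #|[set v : 'I_(kv (K n)) | kdeg v != 3]|%:R <= eps * (kv (K n))%:R).
Proof.
move=> eps_gt0; apply: eventually_mono (@ke_kv (eps / 2) _) => [n|]; last first.
  by rewrite divr_gt0 ?ltr0n.
have := card_kdeg_neq3 (@kernelK n); rewrite -(ler_nat rat) natrD natrM.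
by rewrite ler_norml => + /andP [_ le_ratio]; lra.
Qed.

Lemma lwc_uniform_kernel_vertex : lwc_to_P (fun n => prob_ball_VK (K n) (k n)) 3.
Proof.
move=> H rH l; pose m := l.*2.+2; pose M : rat := m.+1%:R.
have M_gt0 : 0 < M by rewrite ltr0n.
have lt_mk n : 2 * M <= (k n)%:R -> (m < k n)%N.
  by move=> le_Mk; rewrite -(ltr_nat rat); apply: lt_le_trans le_Mk; rewrite /M -natr1; lra.
have k_large := k_unbounded (mulr_gt0 (ltr0n _ 2) M_gt0).
apply: (@cvg_rat_dist_le _ (fun n => (#|[set v : 'I_(kv (K n)) | kdeg v != 3]|%:R +
    2 * ((ke (K n) * ke (K n) * m.+1)%N%:R / (k n - m)%N%:R)) / (kv (K n))%:R)).
  by apply: eventually_mono k_large => n /lt_mk; apply: prob_ball_VK_approx.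
move=> eps eps_gt0.
have irregular := few_irregular_vertices (divr_gt0 eps_gt0 (ltr0n _ 4)).
have small := @ke_o_k (eps / (32 * M)) (divr_gt0 eps_gt0 (mulr_gt0 (ltr0n _ 32) M_gt0)).
apply: eventually_mono (eventually_and (eventually_and kv_le_ke_le_2kv k_large)
  (eventually_and irregular small)) => n [[[_ le_2kv] le_Mk] [le_D le_k]].
have le_k' : 32 * M * (ke (K n))%:R <= eps * (k n)%:R.
  have c_gt0 : 0 < 32 * M by rewrite mulr_gt0 ?ltr0n.
  by rewrite mulrC -ler_pdivlMr // mulrAC.
rewrite (natrB _ (ltnW (lt_mk n le_Mk))) !natrM.
apply: VK_bound_arith (ler0n _ _) _ le_D (ler0n _ _) le_2kv le_k' le_Mk.
- by rewrite ltr0n.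
- exact: eps_gt0.
- by rewrite ltr_nat.
Qed.

End Asymptotics.

Unset Implicit Arguments.

Theorem mainTheorem15 (K : nat -> kgraph) (k : nat -> nat) :
  (forall n, is_kernel (K n)) ->
  (forall n, (0 < kv (K n))%N) ->
  (* |E(K)| = o(k) *)
  (forall eps : rat, 0 < eps -> exists N, forall n, (N <= n)%N ->
      (ke (K n))%:R <= eps * (k n)%:R) ->
  (* |E(K)| = (3/2 + o(1)) |V(K)| *)
  (forall eps : rat, 0 < eps -> exists N, forall n, (N <= n)%N ->
      `|(ke (K n))%:R - 3 / 2 * (kv (K n))%:R| <= eps * (kv (K n))%:R) ->
  lwc_to_P (fun n => prob_ball_VC (K n) (k n)) 2 /\
  lwc_to_P (fun n => prob_ball_VK (K n) (k n)) 3.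
Proof.
move=> kernelK kv_gt0 ke_o_k ke_kv.
by split; [apply: lwc_uniform_core_vertex | apply: lwc_uniform_kernel_vertex].
Qed.
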